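(* Let $s\ge4$, $j\in\{s,\dots,p\}$, $M>0$, $\gamma\in(0,1)$ and $\tilde a=\sqrt{M^2/(2+\gamma^2)}$. Define $\beta^*=(\tfrac{\tilde a}{\sqrt{s-2}},\dots,\tfrac{\tilde a}{\sqrt{s-2}},\tilde a,0,\dots,0)+\tilde a\gamma e_j$ (first $s-2$ entries equal to $\tilde a/\sqrt{s-2}$, entry $s-1$ equal to $\tilde a$), $\Sigma_0=I_p-\gamma(e_{s-1}e_j^\top+e_je_{s-1}^\top)$, and $\beta_1=\beta^*-2\tilde a\gamma e_j$, $\Sigma_1=I_p+\gamma(e_{s-1}e_j^\top+e_je_{s-1}^\top)$. In the model where $x\sim N_p(0,\Sigma)$, $y=x^\top\beta+\varepsilon$ with $\varepsilon\sim N(0,\sigma_\varepsilon^2)$ independent, and each coordinate of $x$ is independently observed with probability $\rho_*$, let $p(y,x_{\mathrm{obs}};\beta,\Sigma)$ denote the joint likelihood of the observation pattern and the observed data $(y,x_{\mathrm{obs}})$. Then $p(y,x_{\mathrm{obs}};\beta^*,\Sigma_0)=p(y,x_{\mathrm{obs}};\beta_1,\Sigma_1)$ for every observation pattern in which $x_{s-1}$ and $x_j$ are not both observed (and all values of $y,x_{\mathrm{obs}}$).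
   Context: $e_k$ denotes the $k$-th standard basis vector of $\mathbb R^p$. The missingness is independent of $(x,\varepsilon)$. *)

From HB Require Import structures.
From mathcomp Require Import all_boot all_order all_algebra.
From mathcomp Require Import all_classical all_reals all_analysis.
Set Implicit Arguments. Unset Strict Implicit. Unset Printing Implicit Defensive.
Import Order.TTheory GRing.Theory Num.Theory.
Local Open Scope ring_scope.

(* Coordinates of R^p are 'I_p (0-based); the paper's 1-based index k
   corresponds to the ordinal with value k-1. *)

Definition ebasis (R : realType) (p k : nat) : 'cV[R]_p :=
  \col_(i < p) (if (i.+1 == k)%N then 1 else 0).

Definition Esym (R : realType) (p a b : nat) : 'M[R]_p :=
  ebasis R p a *m (ebasis R p b)^T + ebasis R p b *m (ebasis R p a)^T.

Definition atil (R : realType) (M gamma : R) : R :=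
  Num.sqrt (M ^+ 2 / (2 + gamma ^+ 2)).

Definition beta_star (R : realType) (p s j : nat) (M gamma : R) : 'cV[R]_p :=
  (\col_(i < p) (if (i.+1 <= s - 2)%N then atil M gamma / Num.sqrt (s - 2)%:R
                 else if (i.+1 == s - 1)%N then atil M gamma else 0))
  + (atil M gamma * gamma) *: ebasis R p j.

Definition Sigma0 (R : realType) (p s j : nat) (gamma : R) : 'M[R]_p :=
  1%:M - gamma *: Esym R p (s - 1) j.

Definition beta1 (R : realType) (p s j : nat) (M gamma : R) : 'cV[R]_p :=
  beta_star p s j M gamma - (2 * atil M gamma * gamma) *: ebasis R p j.

Definition Sigma1 (R : realType) (p s j : nat) (gamma : R) : 'M[R]_p :=
  1%:M + gamma *: Esym R p (s - 1) j.

Definition obs_idx (p : nat) (O : {set 'I_p}) (i : 'I_#|O|) : 'I_p := enum_val i.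

(* covariance matrix of (y, x_O) when x ~ N_p(0,Sigma), y = x^T beta + eps,
   eps ~ N(0, sigma^2) independent of x *)
Definition obs_cov (R : realType) (p : nat) (sigma : R) (beta : 'cV[R]_p)
    (Sigma : 'M[R]_p) (O : {set 'I_p}) : 'M[R]_(1 + #|O|) :=
  let v := Sigma *m beta in
  let vO : 'cV[R]_#|O| := \col_(i < #|O|) v (obs_idx i) ord0 in
  block_mx (beta^T *m Sigma *m beta + (sigma ^+ 2)%:M) vO^T
           vO (\matrix_(i < #|O|, k < #|O|) Sigma (obs_idx i) (obs_idx k)).

Definition gauss_density (R : realType) (n : nat) (C : 'M[R]_n) (z : 'cV[R]_n) : R :=
  powR (2 * pi) (- (n%:R / 2)) * powR (\det C) (- (1 / 2))
  * expR (- ((z^T *m invmx C *m z) ord0 ord0 / 2)).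

(* joint likelihood of the observation pattern O (each coordinate observed
   independently with probability rho) and of the observed data (y, x_O) *)
Definition likelihood (R : realType) (p : nat) (rho sigma : R)
    (beta : 'cV[R]_p) (Sigma : 'M[R]_p) (O : {set 'I_p})
    (y : R) (xO : 'cV[R]_#|O|) : R :=
  rho ^+ #|O| * (1 - rho) ^+ (p - #|O|)
  * gauss_density (obs_cov sigma beta Sigma O) (col_mx y%:M xO).

From Pilot Require Import Defs.
From HB Require Import structures.
From mathcomp Require Import all_boot all_order all_algebra.
From mathcomp Require Import all_classical all_reals all_analysis.
From mathcomp Require Import ring zify.
Import Order.TTheory GRing.Theory Num.Theory.
Local Open Scope ring_scope.

(* The observed Gaussian law of (y, x_O) only involves beta^T Sigma beta, the
   cross-covariances (Sigma beta)_O and the block Sigma_OO.  Both parameter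
   choices give Sigma beta = beta^* - a gamma e_j - a gamma^2 e_(s-1), whose
   j-th entry vanishes, so the quadratic forms agree as well; and Sigma0,
   Sigma1 only differ at the entries (s-1, j) and (j, s-1), which do not lie
   in O x O when x_(s-1) and x_j are not both observed. *)

Lemma tr_ebasis_mul {R : realType} {p k} {i : 'I_p} (X : 'cV[R]_p) :
  i.+1 = k -> (ebasis R p k)^T *m X = (X i 0)%:M.
Proof.
move=> <-; apply/matrixP => a b; rewrite !ord1 !mxE (bigD1 i) //= big1.
  by rewrite !mxE eqxx mul1r addr0.
by move=> i' /negbTE ne_i'i; rewrite !mxE eqSS (inj_eq val_inj) ne_i'i mul0r.
Qed.

Lemma Esym_mul {R : realType} {p a b} {ia ib : 'I_p} (X : 'cV[R]_p) :
  ia.+1 = a -> ib.+1 = b ->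
  Esym R p a b *m X = X ib 0 *: ebasis R p a + X ia 0 *: ebasis R p b.
Proof.
move=> hia hib; rewrite /Esym mulmxDl -!mulmxA.
by rewrite (tr_ebasis_mul _ hib) (tr_ebasis_mul _ hia) !mul_mx_scalar.
Qed.

Lemma Esym_eq0_off_pair {R : realType} {p a b} {O : {set 'I_p}} :
  ~ ((exists2 i : 'I_p, i \in O & i.+1 = a) /\
     (exists2 i : 'I_p, i \in O & i.+1 = b)) ->
  {in O &, forall x y, Esym R p a b x y = 0}.
Proof.
move=> notOab x y xO yO; rewrite /Esym !mxE !big_ord1 !mxE.
have notOuv u v : u \in O -> v \in O -> (u.+1 == a) && (v.+1 == b) = false.
  move=> uO vO; apply/negbTE/andP => -[/eqP ua /eqP vb].
  by apply: notOab; split; [exists u | exists v].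
move: (notOuv x y xO yO) (notOuv y x yO xO).
by case: (x.+1 == a) (y.+1 == b) (x.+1 == b) (y.+1 == a) => [] [] [] [] //= _ _;
  rewrite ?mulr0 ?mul0r ?addr0.
Qed.

Lemma quad_form_congr {R : pzRingType} {p} {b0 b1 : 'cV[R]_p} {S0 S1 : 'M[R]_p} :
  S0 *m b0 = S1 *m b1 -> (b0 - b1)^T *m (S1 *m b1) = 0 ->
  b0^T *m S0 *m b0 = b1^T *m S1 *m b1.
Proof.
move=> eqSb orth; apply/eqP; rewrite -!mulmxA eqSb -subr_eq0 -mulmxBl.
by rewrite -linearB /= orth.
Qed.

Lemma obs_cov_congr {R : realType} {p} (sigma : R) {b0 b1 : 'cV[R]_p}
    {S0 S1 : 'M[R]_p} {O : {set 'I_p}} :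
  S0 *m b0 = S1 *m b1 -> b0^T *m S0 *m b0 = b1^T *m S1 *m b1 ->
  {in O &, forall x y, S0 x y = S1 x y} ->
  obs_cov sigma b0 S0 O = obs_cov sigma b1 S1 O.
Proof.
move=> eqSb eq_quad eqS; rewrite /obs_cov /= eqSb eq_quad; congr block_mx.
by apply/matrixP => u v; rewrite !mxE eqS // /obs_idx enum_valP.
Qed.

Lemma Sigma0_Sigma1_on {R : realType} {p s j} (gamma : R) {O : {set 'I_p}} :
  ~ ((exists2 i : 'I_p, i \in O & i.+1 = (s - 1)%N) /\
     (exists2 i : 'I_p, i \in O & i.+1 = j)) ->
  {in O &, forall x y, Sigma0 p s j gamma x y = Sigma1 p s j gamma x y}.
Proof.
move=> notO x y xO yO; have := Esym_eq0_off_pair (R := R) notO _ _ xO yO.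
rewrite /Sigma0 /Sigma1; move: (Esym R p (s - 1) j) => E Exy.
by rewrite !mxE Exy mulr0 subr0 addr0.
Qed.

Section Construction.
Context {R : realType} {p s j : nat} {M gamma : R} {i_e i_f : 'I_p}.
Hypotheses (le_sj : (s <= j)%N) (i_eE : i_e.+1 = (s - 1)%N) (i_fE : i_f.+1 = j).

Local Notation a := (atil M gamma).
Local Notation e := (ebasis R p (s - 1)).
Local Notation f := (ebasis R p j).
Local Notation beta_star := (beta_star p s j M gamma).
Local Notation beta1 := (beta1 p s j M gamma).
Local Notation Sigma0 := (Sigma0 p s j gamma).
Local Notation Sigma1 := (Sigma1 p s j gamma).

Lemma beta_star_e : beta_star i_e 0 = a.
Proof.
rewrite /Defs.beta_star !mxE i_eE eqxx.
have -> : (s - 1 <= s - 2)%N = false by lia.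
have -> : ((s - 1)%N == j) = false by lia.
by rewrite mulr0 addr0.
Qed.

Lemma beta_star_f : beta_star i_f 0 = a * gamma.
Proof.
rewrite /Defs.beta_star !mxE i_fE eqxx.
have -> : (j <= s - 2)%N = false by lia.
have -> : (j == (s - 1)%N) = false by lia.
by rewrite mulr1 add0r.
Qed.

Lemma beta1_e : beta1 i_e 0 = a.
Proof.
rewrite /Defs.beta1 mxE beta_star_e !mxE i_eE.
have -> : ((s - 1)%N == j) = false by lia.
by rewrite mulr0 subr0.
Qed.

Lemma beta1_f : beta1 i_f 0 = - (a * gamma).
Proof. by rewrite /Defs.beta1 mxE beta_star_f !mxE i_fE eqxx; ring. Qed.

Lemma Sigma0_mul_beta_star :
  Sigma0 *m beta_star = beta_star - (a * gamma) *: f - (a * gamma ^+ 2) *: e.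
Proof.
rewrite /Defs.Sigma0 mulmxBl mul1mx -scalemxAl (Esym_mul _ i_eE i_fE).
rewrite beta_star_f beta_star_e.
move: beta_star e f => B E F; apply/matrixP => u v; rewrite !mxE; ring.
Qed.

Lemma Sigma1_mul_beta1 :
  Sigma1 *m beta1 = beta_star - (a * gamma) *: f - (a * gamma ^+ 2) *: e.
Proof.
rewrite /Defs.Sigma1 mulmxDl mul1mx -scalemxAl (Esym_mul _ i_eE i_fE).
rewrite beta1_f beta1_e /Defs.beta1.
move: beta_star e f => B E F; apply/matrixP => u v; rewrite !mxE; ring.
Qed.

Lemma Sigma0_beta_star_Sigma1_beta1 : Sigma0 *m beta_star = Sigma1 *m beta1.
Proof. by rewrite Sigma0_mul_beta_star Sigma1_mul_beta1. Qed.

Lemma Sigma1_beta1_f : (Sigma1 *m beta1) i_f 0 = 0.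
Proof.
rewrite Sigma1_mul_beta1; move: beta_star_f; move: beta_star => B Bf.
rewrite !mxE Bf i_fE eqxx.
have -> : (j == (s - 1)%N) = false by lia.
by rewrite mulr1 mulr0 subr0 subrr.
Qed.

Lemma quad_beta_star_beta1 :
  beta_star^T *m Sigma0 *m beta_star = beta1^T *m Sigma1 *m beta1.
Proof.
apply: quad_form_congr; first exact: Sigma0_beta_star_Sigma1_beta1.
have -> : beta_star - beta1 = (2 * a * gamma) *: f.
  by rewrite /Defs.beta1 opprB addrC subrK.
rewrite linearZ /= -scalemxAl (tr_ebasis_mul _ i_fE) Sigma1_beta1_f.
by rewrite raddf0 scaler0.
Qed.

End Construction.

Theorem lemma8 (R : realType) (p s j : nat) (M gamma rho sigma : R)
  (hs : (4 <= s)%N) (hsj : (s <= j)%N) (hjp : (j <= p)%N)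
  (hM : 0 < M) (hg0 : 0 < gamma) (hg1 : gamma < 1)
  (hsig : 0 < sigma) (hr0 : 0 <= rho) (hr1 : rho <= 1)
  (O : {set 'I_p})
  (hO : ~ ((exists2 i : 'I_p, i \in O & (i.+1 = s - 1)%N) /\
           (exists2 i : 'I_p, i \in O & (i.+1 = j)%N)))
  (y : R) (xO : 'cV[R]_#|O|) :
  likelihood rho sigma (beta_star p s j M gamma) (Sigma0 p s j gamma) y xO
  = likelihood rho sigma (beta1 p s j M gamma) (Sigma1 p s j gamma) y xO.
Proof.
have lt_e : (s - 2 < p)%N by lia.
have lt_f : (j - 1 < p)%N by lia.
have i_eE : (Ordinal lt_e).+1 = (s - 1)%N by rewrite /=; lia.
have i_fE : (Ordinal lt_f).+1 = j by rewrite /=; lia.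
by rewrite /likelihood (obs_cov_congr sigma
  (Sigma0_beta_star_Sigma1_beta1 (M := M) hsj i_eE i_fE)
  (quad_beta_star_beta1 (M := M) hsj i_eE i_fE) (Sigma0_Sigma1_on gamma hO)).
Qed.
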